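(* Let $n\ge 2$, let $\mathcal{S}\subseteq(\mathbb{C}^d)^{\otimes n}$ be the permutation-symmetric subspace, let $|\psi\rangle\in\mathcal{S}$, and let $B$ be an invertible $d\times d$ complex matrix. Then $B_{(1)}B_{(2)}^{-1}|\psi\rangle=|\psi\rangle$ if and only if $B_{(1)}|\psi\rangle\in\mathcal{S}$.
   Context: $\mathcal{S}$ is the set of vectors in $(\mathbb{C}^d)^{\otimes n}$ invariant under all permutations of the $n$ tensor factors. For a $d\times d$ matrix $X$ and $1\le k\le n$, $X_{(k)}$ denotes $\mathbb{I}\otimes\cdots\otimes\mathbb{I}\otimes X\otimes\mathbb{I}\otimes\cdots\otimes\mathbb{I}$ with $X$ in the $k$-th position of the $n$-fold tensor product. *)

From HB Require Import structures.
From mathcomp Require Import all_boot all_order all_algebra all_fingroup.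
From mathcomp Require Import complex reals.
Set Implicit Arguments. Unset Strict Implicit. Unset Printing Implicit Defensive.
Import Order.TTheory GRing.Theory Num.Theory.
Local Open Scope ring_scope.

(* Multi-indices of the standard product basis of (C^d)^{⊗n}. *)
Definition midx (n d : nat) := {ffun 'I_n -> 'I_d}.

(* A vector of (F^d)^{⊗n}: its coordinates in the product basis. *)
Definition tens (F : Type) (n d : nat) := {ffun midx n d -> F}.

Definition upd n d (x : midx n d) (k : 'I_n) (j : 'I_d) : midx n d :=
  [ffun i => if i == k then j else x i].

(* X_(k) = I ⊗ ... ⊗ X (k-th slot) ⊗ ... ⊗ I acting on psi. *)
Definition op_at (F : pzRingType) n d (X : 'M[F]_d) (k : 'I_n)
    (psi : tens F n d) : tens F n d :=
  [ffun x : midx n d => \sum_(j < d) X (x k) j * psi (upd x k j)].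

Definition symmetric_tens (F : Type) n d (psi : tens F n d) : Prop :=
  forall (s : 'S_n) (x : midx n d), psi [ffun i => x (s i)] = psi x.

(* For symmetric psi, permuting the tensor factors of B_(k) psi by s gives
   B_(s k) psi. Hence B_(1) psi is symmetric iff all B_(k) psi coincide, which
   (using transpositions) happens iff B_(1) psi = B_(2) psi. Applying B_(2) and
   commuting the factors, this is equivalent to B_(1) B_(2)^-1 psi = psi. *)
From HB Require Import structures.
From mathcomp Require Import all_boot all_order all_algebra all_fingroup.
From mathcomp Require Import complex reals.
Set Implicit Arguments. Unset Strict Implicit. Unset Printing Implicit Defensive.
Import GRing.Theory.
Local Open Scope ring_scope.

Section MultiIndex.
Variables (n d : nat).
Implicit Types (x : midx n d) (k l : 'I_n) (j m : 'I_d).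

Lemma upd_at x k j : upd x k j k = j.
Proof. by rewrite ffunE eqxx. Qed.

Lemma upd_neq x k j l : l != k -> upd x k j l = x l.
Proof. by move=> lk; rewrite ffunE (negbTE lk). Qed.

Lemma upd_id x k : upd x k (x k) = x.
Proof. by apply/ffunP=> i; rewrite ffunE; case: eqP => [->|]. Qed.

Lemma upd_upd x k j m : upd (upd x k j) k m = upd x k m.
Proof. by apply/ffunP=> i; rewrite !ffunE; case: eqP. Qed.

Lemma upd_comm x k l j m : k != l ->
  upd (upd x k j) l m = upd (upd x l m) k j.
Proof.
move=> kl; apply/ffunP=> i; rewrite !ffunE.
by case: (eqVneq i l) => [->|//]; rewrite eq_sym (negbTE kl).
Qed.

End MultiIndex.

Definition permt (F : Type) n d (s : 'S_n) (psi : tens F n d) : tens F n d :=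
  [ffun x : midx n d => psi [ffun i => x (s i)]].

Lemma symmetric_tensP (F : Type) n d (psi : tens F n d) :
  symmetric_tens psi <-> forall s, permt s psi = psi.
Proof.
split=> [sym s | fix_psi s x]; first by apply/ffunP=> x; rewrite ffunE sym.
by rewrite -{2}(fix_psi s) ffunE.
Qed.

Section OneSiteOperators.
Variables (F : pzRingType) (n d : nat).
Implicit Types (psi : tens F n d) (A C X : 'M[F]_d) (k : 'I_n) (s : 'S_n).

Lemma op_atM A C k psi : op_at A k (op_at C k psi) = op_at (A *m C) k psi.
Proof.
apply/ffunP=> x; rewrite !ffunE.
under eq_bigr => j _ do rewrite ffunE upd_at big_distrr /=.
rewrite exchange_big /=; apply: eq_bigr => l _.
rewrite mxE big_distrl /=; apply: eq_bigr => j _.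
by rewrite upd_upd mulrA.
Qed.

Lemma op_at1 k psi : op_at 1%:M k psi = psi.
Proof.
apply/ffunP=> x; rewrite ffunE (bigD1 (x k)) //= mxE eqxx mul1r upd_id.
by rewrite big1 ?addr0 // => j jx; rewrite mxE eq_sym (negbTE jx) mul0r.
Qed.

Lemma permt_op_at X s k psi :
  permt s (op_at X k psi) = op_at X (s k) (permt s psi).
Proof.
apply/ffunP=> x; rewrite !ffunE; apply: eq_bigr => j _.
rewrite !ffunE; congr (_ * psi _); apply/ffunP=> i.
by rewrite !ffunE (inj_eq perm_inj).
Qed.

Lemma permt_op_at_sym X s k psi : symmetric_tens psi ->
  permt s (op_at X k psi) = op_at X (s k) psi.
Proof. by move/symmetric_tensP=> sym; rewrite permt_op_at sym. Qed.

Lemma symmetric_op_atP X k l psi : symmetric_tens psi -> k != l ->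
  symmetric_tens (op_at X k psi) <-> op_at X k psi = op_at X l psi.
Proof.
move=> sym kl; split=> [/symmetric_tensP fix_Xk | Xkl].
  by rewrite -(fix_Xk (tperm k l)) permt_op_at_sym // tpermL.
have Xm m : op_at X m psi = op_at X k psi.
  have [->//|mk] := eqVneq m k; have [->//|ml] := eqVneq m l.
  (* the transposition (k m) fixes l and moves X from site k to site m *)
  rewrite -[in LHS](tpermL k m) -permt_op_at_sym // Xkl permt_op_at_sym //.
  by rewrite tpermD // eq_sym.
by apply/symmetric_tensP=> s; rewrite permt_op_at_sym // Xm.
Qed.

End OneSiteOperators.

Section Commutative.
Variables (F : comUnitRingType) (n d : nat).
Implicit Types (psi : tens F n d) (A B C : 'M[F]_d) (k l : 'I_n).

Lemma op_atC A C k l psi : k != l ->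
  op_at A k (op_at C l psi) = op_at C l (op_at A k psi).
Proof.
move=> kl; have lk : l != k by rewrite eq_sym.
apply/ffunP=> x; rewrite !ffunE.
under eq_bigr => j _ do rewrite ffunE (upd_neq _ _ lk) big_distrr /=.
under [RHS]eq_bigr => j _ do rewrite ffunE (upd_neq _ _ kl) big_distrr /=.
rewrite exchange_big /=; apply: eq_bigr => j _; apply: eq_bigr => m _.
by rewrite upd_comm // !mulrA [A _ _ * _]mulrC.
Qed.

Lemma op_at_invmx_fixP B k l psi : B \in unitmx -> k != l ->
  op_at B k (op_at (invmx B) l psi) = psi <-> op_at B k psi = op_at B l psi.
Proof.
move=> uB kl; split=> [fix_psi | Bkl].
  by rewrite -[in RHS]fix_psi (op_atC _ _ _ kl) op_atM mulmxV // op_at1.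
by rewrite (op_atC _ _ _ kl) Bkl op_atM mulVmx // op_at1.
Qed.

End Commutative.

Theorem lemma1 (R : realType) (n d : nat) (hn : (2 <= n)%N)
    (k1 k2 : 'I_n) (hk1 : val k1 = 0%N) (hk2 : val k2 = 1%N)
    (psi : tens (complex R) n d) (B : 'M[complex R]_d) :
  symmetric_tens psi -> B \in unitmx ->
  (op_at B k1 (op_at (invmx B) k2 psi) = psi <-> symmetric_tens (op_at B k1 psi)).
Proof.
move=> sym uB.
have k12 : k1 != k2 by rewrite -val_eqE hk1 hk2.
have sym_B := symmetric_op_atP B sym k12.
have fix_B := op_at_invmx_fixP psi uB k12.
by split=> [/fix_B/sym_B | /sym_B/fix_B].
Qed.
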